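(* Let $k=\mathbb R$. For any $1$-cocycle $(b,a)_c:G_{\mathbb R}\to\pi/[\pi]^2_3$, either $\delta_3^{\operatorname{mod}2}((b,a)_c)=0$ or $\delta_3^{\operatorname{mod}2}((b,a)_{c+\{-1\}})=0$.
   Context: $\pi=\pi_1^{et}(\mathbb P^1_{\mathbb C}-\{0,1,\infty\},\overrightarrow{01})\cong\langle x,y\rangle^\wedge$ (profinite free group; $x$ loop around $0$, $y$ loop around $1$) with $G_{\mathbb R}$-action $\sigma(x)=x^{\chi(\sigma)}$, $\sigma(y)=\mathfrak f(\sigma)^{-1}y^{\chi(\sigma)}\mathfrak f(\sigma)$, $\mathfrak f$ a cocycle valued in $[\pi]_2$. Lower exponent-$2$ central series: $[\pi]^2_1=\pi$, $[\pi]^2_{n+1}=\overline{[\pi,[\pi]^2_n]([\pi]^2_n)^2}$. $(\pi/[\pi]^2_3)^{ab}=\mathbb Z/4(1)x\oplus\mathbb Z/4(1)y$ and $\ker(\pi/[\pi]^2_3\to(\pi/[\pi]^2_3)^{ab})=\mathbb Z/2\,[x,y]$, so every cochain in $\pi/[\pi]^2_3$ has the form $(b,a)_c(g)=y^{a(g)}x^{b(g)}[x,y]^{c(g)}$ with $b,a$ valued in $\mathbb Z/4(1)$ and $c$ valued in $\mathbb Z/2$. $\delta_3^{\operatorname{mod}2}$ is the connecting map ${\rm H}^1(G,\pi/[\pi]^2_3)\to{\rm H}^2(G,K)$ of the central extension $1\to K\to\pi/([\pi]^2_4([\pi]^2_2)^2)\to\pi/[\pi]^2_3\to1$, $K\cong\mathbb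 Z/2[[x,y],x]\oplus\mathbb Z/2[[x,y],y]$ with trivial action (equivalently, the mod-$2$ reduction of the obstruction $\delta_3$ for $1\to[\pi]_3/[\pi]_4\to\pi/[\pi]_4\to\pi/[\pi]_3\to1$). $\{-1\}:G_{\mathbb R}\to\mathbb Z/2$ is the Kummer cocycle of $-1$, i.e. the nontrivial character of $G_{\mathbb R}$. *)

From mathcomp Require Import all_boot all_order all_algebra.
Set Implicit Arguments.
Unset Strict Implicit.
Unset Printing Implicit Defensive.
Import GRing.Theory.
Local Open Scope ring_scope.

(* The absolute Galois group G_R = Gal(C/R) = {1, complex conjugation}. *)
(* false = identity, true = complex conjugation.                        *)
Definition GR := bool.
Definition gmul (g h : GR) : GR := xorb g h.

(* Kummer cocycle {-1} : G_R -> Z/2 (the nontrivial character). *)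
Definition kummer_m1 (g : GR) : 'Z_2 := if g then 1 else 0.

(* The finite 2-group  Q := pi / ([pi]^2_4 ([pi]^2_2)^2)   (order 128).
   An element (a, b, e, p, q) stands for the normal form
        y^a x^b [x,y]^e [[x,y],x]^p [[x,y],y]^q,
   a, b in Z/4, e, p, q in Z/2; K = <[[x,y],x], [[x,y],y]> = (p, q)-part. *)
Definition Q := ('Z_4 * 'Z_4 * 'Z_2 * 'Z_2 * 'Z_2)%type.
Definition qa (g : Q) : 'Z_4 := g.1.1.1.1.
Definition qb (g : Q) : 'Z_4 := g.1.1.1.2.
Definition qc (g : Q) : 'Z_2 := g.1.1.2.
Definition qu (g : Q) : 'Z_2 := g.1.2.
Definition qv (g : Q) : 'Z_2 := g.2.

Definition m2 (n : nat) : 'Z_2 := inZp n.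

Definition qmul (g h : Q) : Q :=
  (qa g + qa h, qb g + qb h,
   qc g + qc h + m2 (qa h * qb g)%N,
   qu g + qu h + m2 (qa h * 'C(qb g, 2))%N
               + m2 ((qc g + qa h * qb g) * qb h)%N,
   qv g + qv h + m2 (qc g * qa h)%N + m2 (qb g * 'C(qa h, 2))%N).

Definition qone : Q := (0, 0, 0, 0, 0).
Definition qinv (g : Q) : Q :=
  let A : 'Z_4 := - qa g in let B : 'Z_4 := - qb g in
  (A, B, qc g + m2 (A * B)%N,
   qu g + m2 (A * 'C(B, 2))%N + m2 (qc g * B)%N,
   qv g + m2 (B * 'C(A, 2))%N + m2 (qc g * A)%N).

Lemma qinvK (g : Q) : qmul g (qinv g) = qone /\ qmul (qinv g) g = qone.
Proof.
case: g => [[[[[[|[|[|[|a]]]] Ha] [[|[|[|[|b]]]] Hb]] [[|[|e]] He]]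
            [[|[|p]] Hp]] [[|[|q]] Hq]] //;
by split; apply/eqP; rewrite /qmul /qinv /qone /=; vm_compute.
Qed.
Definition qpow (g : Q) (n : nat) : Q := iter n (qmul g) qone.
Definition qcomm (g h : Q) : Q := qmul (qmul (qinv g) (qinv h)) (qmul g h).

Definition qx : Q := (0, 1, 0, 0, 0).
Definition qy : Q := (1, 0, 0, 0, 0).

(* The image of [pi]_2 (closed commutator subgroup) in Q = [Q,Q]:
   the elements with trivial x- and y-exponent. *)
Definition in_comm (g : Q) : Prop := qa g = 0 /\ qb g = 0.

(* The G_R-action on Q attached to f : G_R -> Q (image of the cocycle
   f valued in [pi]_2):  g(x) = x^chi(g),  g(y) = f(g)^-1 y^chi(g) f(g),
   chi(conj) = -1, extended to the normal form as a homomorphism. *)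
Definition gx (g : GR) : Q := if g then qinv qx else qx.
Definition gy (f : GR -> Q) (g : GR) : Q :=
  qmul (qmul (qinv (f g)) (if g then qinv qy else qy)) (f g).
Definition act (f : GR -> Q) (g : GR) (t : Q) : Q :=
  let X := gx g in let Y := gy f g in
  let C := qcomm X Y in
  qmul (qmul (qmul (qmul (qpow Y (qa t)) (qpow X (qb t)))
                   (qpow C (qc t)))
             (qpow (qcomm X C) (qu t)))
       (qpow (qcomm Y C) (qv t)).

Definition galois_cocycle (f : GR -> Q) : Prop :=
  (forall g, in_comm (f g)) /\
  (forall g h, f (gmul g h) = qmul (f g) (act f g (f h))).

(* P := pi / [pi]^2_3 = Q / K (order 32).  (a, b, e) stands for
   y^a x^b [x,y]^e.  Group law and action are induced from Q. *)
Definition P := ('Z_4 * 'Z_4 * 'Z_2)%type.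
Definition liftP (p : P) : Q := (p, 0, 0).
Definition projP (t : Q) : P := t.1.1.
Definition pmul (p p' : P) : P := projP (qmul (liftP p) (liftP p')).
Definition pact (f : GR -> Q) (g : GR) (p : P) : P := projP (act f g (liftP p)).

Definition cochain (b a : GR -> 'Z_4) (c : GR -> 'Z_2) : GR -> P :=
  fun g => (a g, b g, c g).

Definition is_cocycle1 (f : GR -> Q) (s : GR -> P) : Prop :=
  forall g h, s (gmul g h) = pmul (s g) (pact f g (s h)).

(* K = Z/2 [[x,y],x] + Z/2 [[x,y],y], trivial G_R-action. *)
Definition K := ('Z_2 * 'Z_2)%type.
Definition inK (k : K) : Q := (0, 0, 0, k.1, k.2).

(* delta_3^{mod 2}(s) = 0 in H^2(G_R, K): for the lift s~ = liftP o s,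
   the 2-cocycle z(g,h) (defined by s~(g) g(s~(h)) = s~(gh) z(g,h)) is a
   coboundary, i.e. z(g,h) = k(g) + k(h) - k(gh) for a 1-cochain k. *)
Definition delta3_mod2_vanishes (f : GR -> Q) (s : GR -> P) : Prop :=
  exists k : GR -> K, forall g h,
    qmul (liftP (s g)) (act f g (liftP (s h)))
    = qmul (liftP (s (gmul g h))) (inK (k g + k h - k (gmul g h))).

(* A G_R-cocycle f valued in [pi]_2 is forced to lie in the central subgroup K
   of pi / [pi]^2_4 ([pi]^2_2)^2, so the twisted action is the standard one:
   x |-> x^chi, y |-> y^chi.  What remains is a finite question about the
   cocycles of G_R = Z/2 in a group of order 32 and their lifts to a central
   extension of order 128, which is decided by exhaustive computation. *)
From mathcomp Require Import all_boot all_order all_algebra.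
From Stdlib Require Import FunctionalExtensionality.

Set Implicit Arguments.
Unset Strict Implicit.
Unset Printing Implicit Defensive.
Import GRing.Theory.
Local Open Scope ring_scope.

Definition gr_fun {T : Type} (x0 x1 : T) : GR -> T :=
  fun g => if g then x1 else x0.

Lemma gr_funE (T : Type) (u : GR -> T) : gr_fun (u false) (u true) = u.
Proof. by apply: functional_extensionality => -[]. Qed.

Definition GR_elems : seq GR := [:: false; true].
Definition Z2_elems : seq 'Z_2 := [:: 0; 1].
Definition Z4_elems : seq 'Z_4 := [:: 0; 1; 2; 3].
Definition K_elems : seq K := [seq (u, v) | u <- Z2_elems, v <- Z2_elems].
Definition P_elems : seq P :=
  [seq (ab, c) | ab <- [seq (a, b) | a <- Z4_elems, b <- Z4_elems],
                 c <- Z2_elems].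
Definition comm_elems : seq Q :=
  [seq (0, 0, e, k.1, k.2) | e <- Z2_elems, k <- K_elems].

Lemma mem_Z2_elems (x : 'Z_2) : x \in Z2_elems.
Proof. by case: x => [[|[|n]] //= H]. Qed.

Lemma mem_Z4_elems (x : 'Z_4) : x \in Z4_elems.
Proof. by case: x => [[|[|[|[|n]]]] //= H]. Qed.

Lemma mem_K_elems (k : K) : k \in K_elems.
Proof. by case: k => u v; apply: allpairs_f; apply: mem_Z2_elems. Qed.

Lemma mem_P_elems (p : P) : p \in P_elems.
Proof.
case: p => [[a b] c]; apply: allpairs_f; last exact: mem_Z2_elems.
by apply: allpairs_f; apply: mem_Z4_elems.
Qed.

Lemma mem_comm_elems (t : Q) : in_comm t -> t \in comm_elems.
Proof.
case: t => [[[[a b] e] p] q]; rewrite /in_comm /qa /qb /= => -[-> ->].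
by apply: (allpairs_f _ (mem_Z2_elems e) (mem_K_elems (p, q))).
Qed.

Definition forall2_GR (R : GR -> GR -> bool) : bool :=
  all (fun g => all (R g) GR_elems) GR_elems.

Lemma forall2_GRP (R : GR -> GR -> bool) :
  reflect (forall g h, R g h) (forall2_GR R).
Proof.
apply: (iffP allP) => [H g h | H g _]; last by apply/allP => h _.
have /allP Hg : all (R g) GR_elems by apply: H; case: g.
by apply: Hg; case: h.
Qed.

Definition galois_cocycleb (f : GR -> Q) : bool :=
  forall2_GR (fun g h => f (gmul g h) == qmul (f g) (act f g (f h))).

Definition cocycleb (f : GR -> Q) (s : GR -> P) : bool :=
  forall2_GR (fun g h => s (gmul g h) == pmul (s g) (pact f g (s h))).

Lemma galois_cocycleW (f : GR -> Q) : galois_cocycle f -> galois_cocycleb f.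
Proof. by case=> _ H; apply/forall2_GRP => g h; apply/eqP. Qed.

Lemma cocycleP (f : GR -> Q) (s : GR -> P) :
  reflect (is_cocycle1 f s) (cocycleb f s).
Proof. by apply: (iffP (forall2_GRP _)) => H g h; apply/eqP. Qed.

Definition trivial_twist : GR -> Q := fun _ => qone.

Definition central_twist_check : bool :=
  all (fun f0 => all (fun f1 =>
    galois_cocycleb (gr_fun f0 f1) ==> (qc f0 == 0) && (qc f1 == 0))
  comm_elems) comm_elems.

Lemma central_twist_checkT : central_twist_check.
Proof. by vm_compute. Qed.

Lemma galois_cocycle_central (f : GR -> Q) :
  galois_cocycle f -> forall g, exists k, f g = inK k.
Proof.
move=> Hf; have [Hcomm _] := Hf.
have Hc : forall g, qc (f g) = 0.
  have := galois_cocycleW Hf; rewrite -(gr_funE f) => Hb.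
  move: central_twist_checkT => /allP/(_ _ (mem_comm_elems (Hcomm false))).
  move=> /allP/(_ _ (mem_comm_elems (Hcomm true))); rewrite Hb.
  by case/andP=> /eqP ? /eqP ? [].
move=> g; exists (qu (f g), qv (f g)); move: (Hcomm g) (Hc g).
case: (f g) => [[[[a b] e] p] q].
by rewrite /in_comm /qa /qb /qc /= => -[-> ->] ->.
Qed.

Lemma act_central_twist (f : GR -> Q) :
  (forall g, exists k, f g = inK k) -> act f = act trivial_twist.
Proof.
move=> Hf; have Egy : forall g, gy f g = gy trivial_twist g.
  move=> g; have [[u v] Ek] := Hf g; rewrite /gy Ek.
  case: u v g {Ek} => [[|[|?]] ?] // [[|[|?]] ?] // [];
  by apply/eqP; vm_compute.
by apply: functional_extensionality => g; rewrite /act Egy.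
Qed.

(* On G_R = Z/2 every coboundary with values in the exponent-2 group K is
   constant, so searching constant cochains k loses nothing. *)
Definition delta3b (f : GR -> Q) (s : GR -> P) : bool :=
  has (fun z => forall2_GR (fun g h =>
    qmul (liftP (s g)) (act f g (liftP (s h)))
    == qmul (liftP (s (gmul g h))) (inK z)))
  K_elems.

Lemma delta3bP (f : GR -> Q) (s : GR -> P) :
  delta3b f s -> delta3_mod2_vanishes f s.
Proof.
case/hasP=> z _ /forall2_GRP H; exists (fun _ => z) => g h.
by rewrite addrK; apply/eqP.
Qed.

Definition twist_kummer (s : GR -> P) : GR -> P :=
  fun g => ((s g).1, (s g).2 + kummer_m1 g).

Definition kummer_dichotomyb (s : GR -> P) : bool :=
  if cocycleb trivial_twist s then
    delta3b trivial_twist s || delta3b trivial_twist (twist_kummer s)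
  else true.

Definition kummer_dichotomy_check : bool :=
  all (fun s0 => all (fun s1 => kummer_dichotomyb (gr_fun s0 s1)) P_elems)
    P_elems.

Lemma kummer_dichotomy_checkT : kummer_dichotomy_check.
Proof. by vm_compute. Qed.

Lemma kummer_dichotomy (s : GR -> P) : kummer_dichotomyb s.
Proof.
rewrite -(gr_funE s).
have /allP/(_ _ (mem_P_elems (s false))) := kummer_dichotomy_checkT.
by move=> /allP/(_ _ (mem_P_elems (s true))).
Qed.

Theorem proposition12p8 (f : GR -> Q) (b a : GR -> 'Z_4) (c : GR -> 'Z_2) :
  galois_cocycle f ->
  is_cocycle1 f (cochain b a c) ->
  delta3_mod2_vanishes f (cochain b a c) \/
  delta3_mod2_vanishes f (cochain b a (fun g => c g + kummer_m1 g)).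
Proof.
move=> Hf Hs; have Eact := act_central_twist (galois_cocycle_central Hf).
have Hs0 : cocycleb trivial_twist (cochain b a c).
  by apply/cocycleP; rewrite /is_cocycle1 /pact -Eact.
have := kummer_dichotomy (cochain b a c); rewrite /kummer_dichotomyb Hs0.
(* twist_kummer (cochain b a c) is convertible to cochain b a (c + {-1}). *)
by case/orP=> /delta3bP; rewrite /delta3_mod2_vanishes -Eact; [left | right].
Qed.
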